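(* Let $V$ be a potential satisfying (E1). Then $\mathbb P$-a.s., for every $y\in\mathbb R^d$, $\mathcal R(-\Lambda_\omega)(y)\ge\mathcal R(\sigma)(y)$.
   Context: $(\Omega,\mathcal F,\mathbb P)$ probability space, $d\in\mathbb N$, $x\mapsto\tau_x$ a group homomorphism from $(\mathbb R^d,+)$ into bijections of $\Omega$, $(x,\omega)\mapsto\tau_x\omega$ product measurable, each $\tau_x$ $\mathbb P$-preserving. $L^p=L^p(\Omega,\mathcal F,\mathbb P)$. Realisation $f_\omega(x):=f(\tau_x\omega)$. A potential is a nonnegative $V\in L^1$ none of whose realisations is Lebesgue-a.e. zero. $E^\lambda$ is the expectation for Brownian motion $(Z_t)$ with constant drift $\lambda$ started at $0$; $\Lambda_\omega(\lambda):=\limsup_{t\to\infty}\frac1t\ln E^\lambda[e^{-\int_0^tV_\omega(Z_s)ds}]$. Weak derivatives on $\Omega$: $D^\nu f=h$ if a.s. $f_\omega\in L^1_{loc}$ has $\nu$-th weak derivative equal Lebesgue-a.e. to $h_\omega$, $h$ measurable on $\Omega$. $\mathcal D(\partial_i)=\{f\in L^2:\partial_if\in L^2\text{ exists weakly}\}$, $\mathbb D_w=\bigcap_i\mathcal D(\partial_i)$, $\mathbb D_w^2=\{f\in\mathbb D_w:\partial_if\in\mathcal D(\partial_i)\,\forall i,\ \|f\|_\infty,\|\nabla f\|_\infty,\|\Delta f\|_\infty<\infty\}$, $\mathbb U=\{u\in\mathbb D_w^2:\exists c>0,u>c\text{ a.s.}\}$, $\mathbb F_w^2=\{f\in\mathbb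 D_w^2:\mathbb Ef=1,\exists c>0: f>c\text{ a.s.}\}$. With $L^\lambda=\frac12\Delta+\lambda\cdot\nabla$, $\sigma(\lambda):=-\sup_{f\in\mathbb F_w^2}\inf_{u\in\mathbb U}\int(\frac{L^\lambda u}{u}-V)f\,d\mathbb P$. (E1): for every $\lambda\in\mathbb R^d$ with $|\lambda|^2/2<\sigma(\lambda)$, $\mathbb P$-a.s. $\sigma(\lambda)\le-\Lambda_\omega(\lambda)$. For $a:\mathbb R^d\to\mathbb R$, $\mathcal R(a)(y):=\sup\{\langle y,\lambda\rangle:|\lambda|^2/2<a(\lambda)\}$, $\sup\emptyset=-\infty$. *)

From mathcomp Require Import all_boot all_order all_algebra.
From mathcomp Require Import all_classical all_reals all_analysis.
Import Order.TTheory GRing.Theory Num.Theory.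
Import numFieldTopology.Exports numFieldNormedType.Exports.

Set Implicit Arguments.
Unset Strict Implicit.
Unset Printing Implicit Defensive.

Local Open Scope classical_set_scope.
Local Open Scope ring_scope.

(** R^d is 'rV[R]_d (row vectors); [Rd R d] is the same carrier equipped with
    its Borel sigma-algebra (generated by the open sets). *)
Definition Rd (R : realType) (d : nat) := g_sigma_algebraType (@open 'rV[R]_d).

Definition dotRd {R : realType} {d : nat} (x y : 'rV[R]_d) : R :=
  \sum_(i < d) x ord0 i * y ord0 i.
Definition sqnorm {R : realType} {d : nat} (x : 'rV[R]_d) : R :=
  \sum_(i < d) x ord0 i ^+ 2.

Definition is_lebesgue_Rd {R : realType} {d : nat}
    (leb : {measure set (Rd R d) -> \bar R}) : Prop :=
  forall a b : 'rV[R]_d, (forall i, a ord0 i <= b ord0 i) ->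
    leb [set x : Rd R d | forall i, a ord0 i < x ord0 i <= b ord0 i] =
    (\prod_(i < d) (b ord0 i - a ord0 i))%:E.

Definition mutually_independent {R : realType} {dW : measure_display}
    {W : measurableType dW} (Q : probability W R) (I : finType)
    (X : I -> W -> R) : Prop :=
  forall A : I -> set R, (forall j, measurable (A j)) ->
    Q (\bigcap_j (X j @^-1` A j)) = \big[*%E/1%E]_(j : I) Q (X j @^-1` A j).

Definition is_brownian {R : realType} {d : nat} {dW : measure_display}
    {W : measurableType dW} (Q : probability W R) (B : R -> W -> 'rV[R]_d) :
    Prop :=
  [/\ forall w, B 0 w = 0,
      forall w, {within `[0, +oo[, continuous (fun s => B s w)},
      forall s i, measurable_fun setT (fun w => B s w ord0 i) &
      forall (n : nat) (t : nat -> R), 0 <= t 0%N -> (forall k, t k < t k.+1) ->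
        mutually_independent Q
          (fun p : 'I_d * 'I_n => fun w => B (t p.2.+1) w ord0 p.1 - B (t p.2) w ord0 p.1)
        /\ forall (i : 'I_d) (k : 'I_n) (A : set R), measurable A ->
          Q [set w | A (B (t k.+1) w ord0 i - B (t k) w ord0 i)] =
          normal_prob 0 (Num.sqrt (t k.+1 - t k)) A].

Definition stationary_action {R : realType} {d : nat} {dO : measure_display}
    {O : measurableType dO} (P : probability O R) (tau : 'rV[R]_d -> O -> O) :
    Prop :=
  [/\ forall w, tau 0 w = w,
      forall x y w, tau (x + y) w = tau x (tau y w),
      forall x, bijective (tau x),
      measurable_fun setT (fun p : (Rd R d * O)%type => tau p.1 p.2) &
      forall x A, measurable A -> P (tau x @^-1` A) = P A].

Section OmegaDefs.
Context {R : realType} {d : nat} {dO : measure_display} {O : measurableType dO}.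
Variables (P : probability O R) (tau : 'rV[R]_d -> O -> O)
  (leb : {measure set (Rd R d) -> \bar R}).

Definition realis (f : O -> R) (w : O) : Rd R d -> R := fun x => f (tau x w).

Definition potential (V : O -> R) : Prop :=
  [/\ measurable_fun setT V, forall w, 0 <= V w,
      P.-integrable setT (fun w => (V w)%:E) &
      forall w, ~ {ae leb, forall x, realis V w x = 0}].

Definition unitv (i : 'I_d) : 'rV[R]_d := delta_mx ord0 i.
Definition partial (i : 'I_d) (f : 'rV[R]_d -> R) : 'rV[R]_d -> R :=
  fun x => 'D_(unitv i) f x.
Definition smooth (f : 'rV[R]_d -> R) : Prop :=
  forall s : seq 'I_d, continuous (foldr partial f s) /\
    forall i x, derivable (foldr partial f s) x (unitv i).
Definition test_function (f : 'rV[R]_d -> R) : Prop :=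
  smooth f /\ compact (closure [set x | f x != 0]).

Definition locally_integrable (g : Rd R d -> R) : Prop :=
  measurable_fun setT g /\
  forall K : set 'rV[R]_d, compact K ->
    (\int[leb]_(x in (K : set (Rd R d))) (`|g x|)%:E < +oo)%E.

Definition weak_partial (i : 'I_d) (f h : O -> R) : Prop :=
  measurable_fun setT h /\
  {ae P, forall w, [/\ locally_integrable (realis f w),
     locally_integrable (realis h w) &
     forall phi, test_function phi ->
       (\int[leb]_x (realis f w x * partial i phi x)%:E =
        - \int[leb]_x (realis h w x * phi x)%:E)%E]}.

Definition L2 (f : O -> R) : Prop :=
  measurable_fun setT f /\ P.-integrable setT (fun w => (f w ^+ 2)%:E).

Definition ess_bounded (f : O -> R) : Prop :=
  exists M : R, {ae P, forall w, `|f w| <= M}.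

Definition Dw2 (f : O -> R) (h g : 'I_d -> O -> R) : Prop :=
  [/\ L2 f,
      forall i, [/\ L2 (h i), weak_partial i f (h i), L2 (g i) &
                   weak_partial i (h i) (g i)],
      ess_bounded f,
      ess_bounded (fun w => Num.sqrt (\sum_(i < d) h i w ^+ 2)) &
      ess_bounded (fun w => \sum_(i < d) g i w)].

Definition bounded_below_pos (f : O -> R) : Prop :=
  exists c : R, 0 < c /\ {ae P, forall w, c < f w}.

Definition inU (u : O -> R) (h g : 'I_d -> O -> R) : Prop :=
  Dw2 u h g /\ bounded_below_pos u.
Definition inF2 (f : O -> R) : Prop :=
  [/\ exists h g, Dw2 f h g, (\int[P]_w (f w)%:E = 1)%E & bounded_below_pos f].

Definition Llam (l : 'rV[R]_d) (h g : 'I_d -> O -> R) (w : O) : R :=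
  2^-1 * (\sum_(i < d) g i w) + \sum_(i < d) l ord0 i * h i w.

Definition sigma (V : O -> R) (l : 'rV[R]_d) : \bar R :=
  (- ereal_sup [set ereal_inf
       [set z | exists u h g, inU u h g /\
          z = \int[P]_w (((Llam l h g w) / u w - V w) * f w)%:E]
     | f in inF2])%E.

End OmegaDefs.

Definition eln {R : realType} (x : \bar R) : \bar R :=
  match x with
  | r%:E => if (0 < r)%R then (ln r)%:E else -oo
  | +oo => +oo
  | -oo => -oo
  end%E.

(** Lambda_omega(lambda) = limsup_{t -> oo} 1/t ln E^lambda[exp(-int_0^t V_omega(Z_s) ds)],
    where Z_s = B_s + s lambda is Brownian motion with drift lambda started at 0. *)
Definition Lambda {R : realType} {d : nat} {dO : measure_display}
    {O : measurableType dO} {dW : measure_display} {W : measurableType dW}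
    (tau : 'rV[R]_d -> O -> O) (Q : probability W R) (B : R -> W -> 'rV[R]_d)
    (V : O -> R) (w : O) (l : 'rV[R]_d) : \bar R :=
  limf_esup (fun t : R =>
    (t^-1)%:E * eln (\int[Q]_v expeR (-
        \int[lebesgue_measure]_(s in (`[0%R, t]%classic : set R)) (V (tau (B s v + s *: l) w))%:E)))%E
    (pinfty_nbhs R).

(** R(a)(y) = sup { <y, lambda> : |lambda|^2/2 < a(lambda) }, sup of empty = -oo. *)
Definition Rtrans {R : realType} {d : nat} (a : 'rV[R]_d -> \bar R)
    (y : 'rV[R]_d) : \bar R :=
  ereal_sup [set (dotRd y l)%:E | l in [set l | ((sqnorm l / 2)%:E < a l)%E]].

Definition E1 {R : realType} {d : nat} {dO : measure_display}
    {O : measurableType dO} {dW : measure_display} {W : measurableType dW}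
    (P : probability O R) (tau : 'rV[R]_d -> O -> O)
    (leb : {measure set (Rd R d) -> \bar R})
    (Q : probability W R) (B : R -> W -> 'rV[R]_d) (V : O -> R) : Prop :=
  forall l : 'rV[R]_d, ((sqnorm l / 2)%:E < sigma P tau leb V l)%E ->
    {ae P, forall w, (sigma P tau leb V l <= - Lambda tau Q B V w l)%E}.

From mathcomp Require Import all_boot all_order all_algebra.
From mathcomp Require Import all_classical all_reals all_analysis.
From mathcomp Require Import lra.
Import Order.TTheory GRing.Theory Num.Theory.
Import numFieldTopology.Exports numFieldNormedType.Exports.
Local Open Scope classical_set_scope.
Local Open Scope ring_scope.

(* (E1) gives sigma <= -Lambda_omega only one lambda at a time, each outside
   its own null set. Choose in each cell of a countable family of shrinking
   rational cubes a representative of {|lambda|^2/2 < sigma}; off the countable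
   union of the exceptional null sets all representatives satisfy
   |lambda|^2/2 < -Lambda_omega, and since they are dense in
   {|lambda|^2/2 < sigma} while lambda |-> <y, lambda> is continuous, the
   supremum defining R(sigma)(y) is approached along them. *)

Lemma ae_forall_countable {R : realType} {dO : measure_display}
    {O : measurableType dO} {P : probability O R} {I : countType}
    {Q : I -> O -> Prop} :
  (forall i, {ae P, forall w, Q i w}) -> {ae P, forall w, forall i, Q i w}.
Proof.
move=> aeQ.
pose Qn n w := if unpickle n is Some i then Q i w else True.
have : {ae P, forall w, forall n, Qn n w}.
  apply: ae_foralln => n; rewrite /Qn.
  by case: unpickle => [i|]; [exact: aeQ | exact: aeW].
by apply: filterS => w Qw i; have := Qw (pickle i); rewrite /Qn pickleK.
Qed.

Lemma ereal_sup_le_approx (R : realType) (T : Type) (f : T -> R) (S U : set T) :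
  (forall l e, S l -> 0 < e -> exists2 l', U l' & f l - e < f l') ->
  (ereal_sup [set (f l)%:E | l in S] <= ereal_sup [set (f l)%:E | l in U])%E.
Proof.
move=> approx; apply: ge_ereal_sup => _ [l Sl <-]; apply/lee_subgt0Pr => e e0.
have [l' Ul' fl'] := approx l e Sl e0.
apply: le_trans (ereal_sup_ubound _) => /=; last by exists l'.
by rewrite -EFinB lee_fin ltW.
Qed.

Section RationalCells.
Context {R : realType} {d : nat}.

Definition in_rat_cell (c : 'rV[rat]_d * nat) (l : 'rV[R]_d) : Prop :=
  forall j, `|l ord0 j - ratr (c.1 ord0 j)| < c.2.+1%:R^-1.

Lemma rat_cell_small (l : 'rV[R]_d) (e : R) : 0 < e ->
  exists c, in_rat_cell c l /\
    forall l', in_rat_cell c l' -> forall j, `|l' ord0 j - l ord0 j| <= e.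
Proof.
move=> e0; pose n := Num.truncn (2 / e).
have n_small : n.+1%:R^-1 < e / 2.
  have h : 2 / e < n.+1%:R by rewrite -truncn_lt_nat ?divr_ge0 ?ltW.
  by rewrite -[e / 2]invf_div ltf_pV2 ?posrE ?divr_gt0.
set dl := n.+1%:R^-1 in n_small *.
have dl0 : 0 < dl by rewrite invr_gt0 ltr0n.
have /boolp.choice[q qP] :
    forall j, exists q : rat, `|l ord0 j - ratr q| < dl.
  move=> j; have [|r] := @rat_in_itvoo R (l ord0 j - dl) (l ord0 j + dl).
    by rewrite ltrD2l gtrN.
  rewrite in_itv /= => /andP[r1 r2].
  by exists r; rewrite ltr_norml; apply/andP; split; lra.
exists (\row_j q j, n); split => [j|l' l'P j]; first by rewrite /= mxE.
move: (l'P j) (qP j); rewrite /= mxE -/dl !ltr_norml ler_norml.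
by move=> /andP[? ?] /andP[? ?]; apply/andP; split; lra.
Qed.

Lemma dotRd_lipschitz (y l1 l2 : 'rV[R]_d) (e : R) :
  (forall j, `|l1 ord0 j - l2 ord0 j| <= e) ->
  `|dotRd y l1 - dotRd y l2| <= e * \sum_(j < d) `|y ord0 j|.
Proof.
move=> close; rewrite /dotRd -sumrB mulr_sumr.
apply: le_trans (ler_norm_sum _ _ _) _; apply: ler_sum => j _.
by rewrite -mulrBr normrM mulrC ler_wpM2r.
Qed.

Definition cell_rep (S : set 'rV[R]_d) (c : 'rV[rat]_d * nat) : 'rV[R]_d :=
  xget 0 [set l | S l /\ in_rat_cell c l].

Lemma cell_repP {S : set 'rV[R]_d} {c} :
  (exists l, S l /\ in_rat_cell c l) ->
  S (cell_rep S c) /\ in_rat_cell c (cell_rep S c).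
Proof. exact: xgetPex. Qed.

Lemma sup_dotRd_le_of_cell_reps (S U : set 'rV[R]_d) (y : 'rV[R]_d) :
  (forall c, (exists l, S l /\ in_rat_cell c l) -> U (cell_rep S c)) ->
  (ereal_sup [set (dotRd y l)%:E | l in S] <=
   ereal_sup [set (dotRd y l)%:E | l in U])%E.
Proof.
move=> repU; apply: ereal_sup_le_approx => l e Sl e0.
pose K := 1 + \sum_(j < d) `|y ord0 j|.
have K0 : 0 < K by rewrite ltr_pwDl ?sumr_ge0.
have [c [lc cell_small]] := rat_cell_small l _ (divr_gt0 e0 K0).
have ex : exists l, S l /\ in_rat_cell c l by exists l.
have [_ repc] := cell_repP ex.
exists (cell_rep S c); first exact: repU.
have := dotRd_lipschitz y _ _ _ (cell_small _ repc).
have : e / K * \sum_(j < d) `|y ord0 j| < e.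
  by rewrite mulrAC ltr_pdivrMr // ltr_pM2l // ltrDr.
move: (_ * _) (dotRd _ _) => u v ue; rewrite ler_norml => /andP[? ?]; lra.
Qed.

End RationalCells.

Theorem lemma3p9 (R : realType) (d : nat)
    (dO : measure_display) (O : measurableType dO) (P : probability O R)
    (tau : 'rV[R]_d -> O -> O)
    (leb : {measure set (Rd R d) -> \bar R})
    (dW : measure_display) (W : measurableType dW) (Q : probability W R)
    (B : R -> W -> 'rV[R]_d)
    (V : O -> R) :
  stationary_action P tau ->
  is_lebesgue_Rd leb ->
  is_brownian Q B ->
  potential P tau leb V ->
  E1 P tau leb Q B V ->
  {ae P, forall w, forall y : 'rV[R]_d,
    (Rtrans (sigma P tau leb V) y <= Rtrans (fun l => - Lambda tau Q B V w l) y)%E}.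
Proof.
move=> _ _ _ _ E1V.
set S := [set l | ((sqnorm l / 2)%:E < sigma P tau leb V l)%E].
have ae_rep c : {ae P, forall w, (exists l, S l /\ in_rat_cell c l) ->
    (sigma P tau leb V (cell_rep S c) <= - Lambda tau Q B V w (cell_rep S c))%E}.
  have [ex|nex] := boolp.pselect (exists l, S l /\ in_rat_cell c l).
    by apply: filterS (E1V _ (cell_repP ex).1) => w + _.
  by apply: aeW => w /nex.
apply: filterS (ae_forall_countable ae_rep) => w reps y.
rewrite /Rtrans; apply: sup_dotRd_le_of_cell_reps => c ex.
exact: lt_le_trans (cell_repP ex).1 (reps c ex).
Qed.
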